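(* (i) For integers $k\geq 2$ and $n\geq 2k^2+3$, $\rho(N_{n,n}^{k-2,1})>\rho(M_{n,n}^{n-k,2})$. (ii) For integers $k\geq 2$ and $n\geq k+1$, $q(M_{n,n}^{n-k,2})>q(N_{n,n}^{k-2,1})$.
   Context: $\rho$ denotes the largest eigenvalue of the adjacency matrix and $q$ the largest eigenvalue of $D+A$ (diagonal degree matrix plus adjacency matrix). $M_{n,m}^{s,t}$: bipartite graph with parts $X=X_1\cup X_2$, $Y=Y_1\cup Y_2$, $|X_1|=s$, $|X_2|=n-s$, $|Y_1|=m-t$, $|Y_2|=t$; edges are all pairs between $X_1$ and $Y_1$, between $X_2$ and $Y_1$, and between $X_2$ and $Y_2$. $N_{n,n}^{q',1}$ (here $q'=k-2$): parts $X=X_1\cup X_2\cup X_3$, $Y=Y_1\cup Y_2\cup Y_3$, $|X_1|=|Y_1|=n-q'-2$, $|X_2|=|Y_2|=q'+1$, $|X_3|=|Y_3|=1$; edges are all pairs between $X_i$ and $Y_i$ ($i=1,2,3$), between $X_1$ and $Y_2$, between $X_2$ and $Y_1\cup Y_3$, and between $X_3$ and $Y_2$. *)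

From HB Require Import structures.
From mathcomp Require Import all_boot all_order all_algebra.
From mathcomp Require Import reals.
Set Implicit Arguments. Unset Strict Implicit. Unset Printing Implicit Defensive.
Import Order.TTheory GRing.Theory Num.Theory.
Local Open Scope ring_scope.

(* A bipartite graph with parts X = 'I_n and Y = 'I_m, given by the relation
   e x y (x in X adjacent to y in Y).  Vertices of the whole graph are
   'I_(n + m): the first n are X, the last m are Y. *)
Definition bip_adj (R : nzRingType) (n m : nat) (e : 'I_n -> 'I_m -> bool)
  : 'M[R]_(n + m) :=
  \matrix_(i, j)
    match split i, split j with
    | inl x, inr y => (e x y)%:R
    | inr y, inl x => (e x y)%:R
    | _, _ => 0
    end.

Definition deg_mx (R : nzRingType) (p : nat) (A : 'M[R]_p) : 'M[R]_p :=
  diag_mx (\row_i \sum_j A i j).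

Definition signless_lap (R : nzRingType) (p : nat) (A : 'M[R]_p) : 'M[R]_p :=
  deg_mx A + A.

Definition largest_eigenvalue (R : realType) (p : nat) (A : 'M[R]_p) (lam : R)
  : Prop :=
  eigenvalue A lam /\ (forall mu, eigenvalue A mu -> mu <= lam).

(* M_{n,m}^{s,t}: X = X1 u X2, |X1| = s (indices x < s), |X2| = n - s;
   Y = Y1 u Y2, |Y1| = m - t (indices y < m - t), |Y2| = t.
   Edges: X1-Y1, X2-Y1, X2-Y2. *)
Definition M_edge (n m s t : nat) (x : 'I_n) (y : 'I_m) : bool :=
  let inX1 := (x < s)%N in
  let inY1 := (y < m - t)%N in
  [|| inX1 && inY1, (~~ inX1) && inY1 | (~~ inX1) && (~~ inY1)].

Definition M_graph (R : nzRingType) (n m s t : nat) : 'M[R]_(n + m) :=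
  bip_adj R (@M_edge n m s t).

(* N_{n,n}^{q,1}: X = X1 u X2 u X3, |X1| = n - q - 2, |X2| = q + 1, |X3| = 1,
   and likewise for Y (part index 1, 2, 3 by position).
   Edges: Xi-Yi (i = 1,2,3), X1-Y2, X2-Y1, X2-Y3, X3-Y2. *)
Definition N_part (n q : nat) (i : nat) : nat :=
  if (i < n - q - 2)%N then 1%N else if (i < n - 1)%N then 2%N else 3%N.

Definition N_edge (n q : nat) (x y : 'I_n) : bool :=
  let a := N_part n q x in
  let b := N_part n q y in
  [|| (a == 1) && (b == 1)%N, (a == 2) && (b == 2)%N, (a == 3) && (b == 3)%N,
      (a == 1) && (b == 2)%N, (a == 2) && (b == 1)%N,
      (a == 2) && (b == 3)%N | (a == 3) && (b == 2)%N].

Definition N_graph (R : nzRingType) (n q : nat) : 'M[R]_(n + n) :=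
  bip_adj R (@N_edge n q).

From HB Require Import structures.
From mathcomp Require Import all_boot all_order all_algebra.
From mathcomp Require Import reals polyrcf.
From mathcomp Require Import ring lra zify.

(* Both graphs are bipartite and their vertex classes split into blocks of
   vertices with the same number of neighbours in every block (equitable
   partitions).  A positive vector, constant on the blocks and satisfying the
   eigen-equations of the small quotient matrix, is a positive eigenvector of
   the symmetric nonnegative adjacency (or signless Laplacian) matrix, so its
   eigenvalue is the largest one.  Each spectral radius is thus a root of the
   characteristic polynomial of a quotient matrix, located by the intermediate
   value theorem.  For the adjacency matrices the cubic of N is negative at the
   root of the quartic of M, and the radius of N lies beyond it; for the
   signless Laplacians the cubic of N is positive at the root of the quadratic
   of M, and the radius of N lies below it. *)

Set Implicit Arguments.
Unset Strict Implicit.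
Unset Printing Implicit Defensive.

Import Order.TTheory GRing.Theory Num.Theory.
Local Open Scope ring_scope.

Lemma largest_eigenvalue_pos_eigvec (R : realType) p (A : 'M[R]_p) (w : 'rV_p) lam :
  (0 < p)%N -> A^T = A -> (forall i j, 0 <= A i j) -> (forall i, 0 < w 0 i) ->
  w *m A = lam *: w -> largest_eigenvalue A lam.
Proof.
move=> p_gt0 A_sym A_ge0 w_gt0 wA; split.
  apply/eigenvalueP; exists w => //; apply/eqP => /rowP/(_ (Ordinal p_gt0)).
  by rewrite mxE => w0; have := w_gt0 (Ordinal p_gt0); rewrite w0 ltxx.
move=> mu /eigenvalueP[v vA v_neq0].
pose a := map_mx Num.norm v.
have Aw : A *m w^T = lam *: w^T by rewrite -{1}A_sym -trmx_mul wA linearZ.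
have S_gt0 : 0 < (a *m w^T) 0 0.
  have [j vj_neq0] : exists j, v 0 j != 0.
    apply/existsP; apply: contraNT v_neq0 => /existsPn v0.
    by apply/eqP/rowP => j; rewrite mxE; apply/eqP/negPn/v0.
  rewrite mxE (bigD1 j) //= ltr_pwDl ?sumr_ge0 // => [|i _]; rewrite !mxE.
    by rewrite mulr_gt0 ?normr_gt0.
  by rewrite mulr_ge0 // ltW.
(* |mu| |v| <= |v| A entrywise; pairing with w and using A^T = A gives
   |mu| <= lam. *)
have mu_le : `|mu| * (a *m w^T) 0 0 <= (a *m A *m w^T) 0 0.
  rewrite !mxE mulr_sumr; apply: ler_sum => j _; rewrite !mxE mulrA.
  apply: ler_wpM2r; first exact: ltW.
  have -> : `|mu| * `|v 0 j| = `|(v *m A) 0 j| by rewrite vA mxE normrM.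
  rewrite mxE; apply: le_trans (ler_norm_sum _ _ _) _; apply: ler_sum => i _.
  by rewrite normrM (ger0_norm (A_ge0 i j)) mxE.
rewrite -mulmxA Aw -scalemxAr [leRHS]mxE ler_pM2r // in mu_le.
exact: le_trans (ler_norm mu) mu_le.
Qed.

Lemma tr_signless_lap (R : nzRingType) p (A : 'M[R]_p) :
  A^T = A -> (signless_lap A)^T = signless_lap A.
Proof. by move=> A_sym; rewrite /signless_lap /deg_mx linearD /= tr_diag_mx A_sym. Qed.

Lemma signless_lap_ge0 (R : numDomainType) p (A : 'M[R]_p) :
  (forall i j, 0 <= A i j) -> forall i j, 0 <= signless_lap A i j.
Proof.
move=> A_ge0 i j; rewrite !mxE addr_ge0 //.
by rewrite mulrn_wge0 // sumr_ge0.
Qed.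

Section BipartiteAdjacency.
Variables (R : nzRingType) (n m : nat) (e : 'I_n -> 'I_m -> bool).

Definition biadj_mx : 'M[R]_(n, m) := \matrix_(x, y) (e x y)%:R.

Definition bip_vec (fx : 'I_n -> R) (fy : 'I_m -> R) : 'rV[R]_(n + m) :=
  row_mx (\row_x fx x) (\row_y fy y).

Lemma bip_adjE : bip_adj R e = block_mx 0 biadj_mx biadj_mx^T 0.
Proof.
apply/matrixP => i j; rewrite !mxE.
by case: (split i) => x; rewrite !mxE; case: (split j) => y; rewrite !mxE.
Qed.

Lemma tr_bip_adj : (bip_adj R e)^T = bip_adj R e.
Proof. by rewrite bip_adjE tr_block_mx !trmx0 trmxK. Qed.

Lemma bip_adj_mul (u : 'rV_n) (v : 'rV_m) :
  row_mx u v *m bip_adj R e = row_mx (v *m biadj_mx^T) (u *m biadj_mx).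
Proof. by rewrite bip_adjE mul_row_block !mulmx0 add0r addr0. Qed.

Lemma bip_adj_eigvec fx fy lam :
  (forall x, \sum_y fy y * (e x y)%:R = lam * fx x) ->
  (forall y, \sum_x fx x * (e x y)%:R = lam * fy y) ->
  bip_vec fx fy *m bip_adj R e = lam *: bip_vec fx fy.
Proof.
move=> eqX eqY; rewrite bip_adj_mul scale_row_mx.
congr row_mx; apply/rowP => z; rewrite !mxE -?eqX -?eqY.
  by apply: eq_bigr => y _; rewrite !mxE.
by apply: eq_bigr => x _; rewrite !mxE.
Qed.

Lemma bip_adj_sum_lshift x : \sum_j bip_adj R e (lshift m x) j = \sum_y (e x y)%:R.
Proof.
rewrite bip_adjE big_split_ord /= big1 => [|j _]; last by rewrite block_mxEul mxE.
by rewrite add0r; apply: eq_bigr => y _; rewrite block_mxEur mxE.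
Qed.

Lemma bip_adj_sum_rshift y : \sum_j bip_adj R e (rshift n y) j = \sum_x (e x y)%:R.
Proof.
rewrite bip_adjE big_split_ord /= [X in _ + X]big1 => [|j _]; last by rewrite block_mxEdr mxE.
by rewrite addr0; apply: eq_bigr => x _; rewrite block_mxEdl !mxE.
Qed.

Lemma bip_lap_eigvec fx fy lam :
  (forall x, fx x * \sum_y (e x y)%:R + \sum_y fy y * (e x y)%:R = lam * fx x) ->
  (forall y, fy y * \sum_x (e x y)%:R + \sum_x fx x * (e x y)%:R = lam * fy y) ->
  bip_vec fx fy *m signless_lap (bip_adj R e) = lam *: bip_vec fx fy.
Proof.
move=> eqX eqY; apply/rowP => i.
rewrite /signless_lap mulmxDr /deg_mx mul_mx_diag bip_adj_mul !mxE -(splitK i).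
case: (split i) => [x|y] /=.
  rewrite (unsplitK (inl x) : split (lshift m x) = inl x) bip_adj_sum_lshift !mxE -eqX.
  by congr (_ + _); apply: eq_bigr => y _; rewrite !mxE.
rewrite (unsplitK (inr y) : split (rshift n y) = inr y) bip_adj_sum_rshift !mxE -eqY.
by congr (_ + _); apply: eq_bigr => x _; rewrite !mxE.
Qed.

End BipartiteAdjacency.

Lemma bip_adj_ge0 (R : numDomainType) n m (e : 'I_n -> 'I_m -> bool) i j :
  0 <= bip_adj R e i j.
Proof. by rewrite !mxE; case: (split i) => ?; case: (split j) => ?; rewrite ?ler0n. Qed.

Lemma bip_vec_gt0 (R : numDomainType) n m (fx : 'I_n -> R) (fy : 'I_m -> R) :
  (forall x, 0 < fx x) -> (forall y, 0 < fy y) -> forall i, 0 < bip_vec fx fy 0 i.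
Proof.
move=> fx_gt0 fy_gt0 i; rewrite -(splitK i).
by case: (split i) => z; rewrite /= ?row_mxEl ?row_mxEr mxE.
Qed.

Section StepSums.
Variable V : nmodType.

Lemma sum_nat_const a b (F : nat -> V) c :
  (forall i, (a <= i < b)%N -> F i = c) -> \sum_(a <= i < b) F i = c *+ (b - a).
Proof. by move=> Fc; rewrite (eq_big_nat _ _ Fc) sumr_const_nat. Qed.

Lemma sum_ord_step n a (c1 c2 : V) : (a <= n)%N ->
  \sum_(i < n) (if (i < a)%N then c1 else c2) = c1 *+ a + c2 *+ (n - a).
Proof.
move=> an; rewrite -(big_mkord xpredT (fun i => if (i < a)%N then c1 else c2)).
rewrite (big_cat_nat (leq0n a) an) /= (sum_nat_const (c := c1)) => [|i /andP[_ ->] //].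
by rewrite (sum_nat_const (c := c2)) ?subn0 // => i /andP[]; rewrite leqNgt => /negbTE ->.
Qed.

Lemma sum_ord_step3 n a b (c1 c2 c3 : V) : (a <= b)%N -> (b <= n)%N ->
  \sum_(i < n) (if (i < a)%N then c1 else if (i < b)%N then c2 else c3) =
  c1 *+ a + c2 *+ (b - a) + c3 *+ (n - b).
Proof.
move=> ab bn.
rewrite -(big_mkord xpredT (fun i => if (i < a)%N then c1 else if (i < b)%N then c2 else c3)).
rewrite (big_cat_nat (leq0n a) (leq_trans ab bn)) (big_cat_nat ab bn) /= addrA.
rewrite (sum_nat_const (c := c1)) => [|i /andP[_ ->] //].
rewrite (sum_nat_const (c := c2)) => [|i /andP[ai ib]]; last by rewrite ltnNge ai ib.
rewrite (sum_nat_const (c := c3)) ?subn0 // => i /andP[bi _].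
by rewrite ltnNge (leq_trans ab bi) ltnNge bi.
Qed.

End StepSums.

Lemma M_edgeE n m s t (x : 'I_n) (y : 'I_m) : M_edge s t x y =
  ~~ (x < s)%N || (y < m - t)%N.
Proof. by rewrite /M_edge /=; case: (x < s)%N; case: (y < m - t)%N. Qed.

Section MSums.
Variables (R : nzRingType) (n m s t : nat).
Hypotheses (s_le_n : (s <= n)%N) (t_le_m : (t <= m)%N).

Lemma M_sumX (x : 'I_n) (b1 b2 : R) :
  \sum_(y < m) (if (y < m - t)%N then b1 else b2) * (M_edge s t x y)%:R =
  (m - t)%:R * b1 + (if (x < s)%N then 0 else t%:R * b2) :> R.
Proof.
rewrite (eq_bigr (fun y : 'I_m => if (y < m - t)%N then b1 else if (x < s)%N then 0 else b2)).
  rewrite sum_ord_step ?leq_subr // subKn // !mulr_natl.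
  by case: (x < s)%N; rewrite ?mul0rn.
by move=> y _; rewrite M_edgeE; case: (y < m - t)%N; case: (x < s)%N; rewrite ?mulr1 ?mulr0.
Qed.

Lemma M_sumY (y : 'I_m) (a1 a2 : R) :
  \sum_(x < n) (if (x < s)%N then a1 else a2) * (M_edge s t x y)%:R =
  (if (y < m - t)%N then s%:R * a1 else 0) + (n - s)%:R * a2 :> R.
Proof.
rewrite (eq_bigr (fun x : 'I_n => if (x < s)%N then if (y < m - t)%N then a1 else 0 else a2)).
  rewrite sum_ord_step // !mulr_natl.
  by case: (y < m - t)%N; rewrite ?mul0rn.
by move=> x _; rewrite M_edgeE; case: (y < m - t)%N; case: (x < s)%N; rewrite ?mulr1 ?mulr0.
Qed.

Lemma M_degX (x : 'I_n) :
  \sum_(y < m) (M_edge s t x y)%:R = (m - t)%:R + (if (x < s)%N then 0 else t%:R) :> R.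
Proof.
have := M_sumX x 1 1; rewrite !mulr1 => <-.
by apply: eq_bigr => y _; rewrite if_same mul1r.
Qed.

Lemma M_degY (y : 'I_m) :
  \sum_(x < n) (M_edge s t x y)%:R = (if (y < m - t)%N then s%:R else 0) + (n - s)%:R :> R.
Proof.
have := M_sumY y 1 1; rewrite !mulr1 => <-.
by apply: eq_bigr => x _; rewrite if_same mul1r.
Qed.

End MSums.

Lemma N_edgeE n q (x y : 'I_n) :
  N_edge q x y =
  ~~ ((x < n - q - 2) && (n - 1 <= y) || (n - 1 <= x) && (y < n - q - 2))%N.
Proof.
rewrite /N_edge /N_part /=.
case: (ltnP x (n - q - 2)) => hx; case: (ltnP x (n - 1)) => hx';
  case: (ltnP y (n - q - 2)) => hy; case: (ltnP y (n - 1)) => hy' //=; lia.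
Qed.

Lemma N_edge_sym n q (x y : 'I_n) : N_edge q x y = N_edge q y x.
Proof.
by rewrite !N_edgeE orbC [((y < _)%N && _)]andbC [((n - 1 <= y)%N && _)]andbC.
Qed.

Section NSums.
Variables (R : nzRingType) (n q : nat).
Hypothesis q2_le_n : (q + 2 <= n)%N.

Lemma N_sum (z : 'I_n) (g1 g2 g3 : R) :
  \sum_(u < n) (if (u < n - q - 2)%N then g1 else if (u < n - 1)%N then g2 else g3) *
                (N_edge q z u)%:R =
  (if (z < n - 1)%N then (n - q - 2)%:R * g1 else 0) + (q + 1)%:R * g2 +
  (if (z < n - q - 2)%N then 0 else g3).
Proof.
rewrite (eq_bigr (fun u : 'I_n => if (u < n - q - 2)%N then (if (z < n - 1)%N then g1 else 0)
  else if (u < n - 1)%N then g2 else if (z < n - q - 2)%N then 0 else g3)) => [|u _]; last first.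
  rewrite N_edgeE; case: (ltnP u (n - q - 2)) => hu; case: (ltnP u (n - 1)) => hu';
    case: (ltnP z (n - q - 2)) => hz; case: (ltnP z (n - 1)) => hz' /=;
    rewrite ?mulr1 ?mulr0 //; lia.
rewrite sum_ord_step3 ?leq_subr //; last lia.
have -> : (n - 1 - (n - q - 2) = q + 1)%N by lia.
have -> : (n - (n - 1) = 1)%N by lia.
rewrite !mulr_natl.
by case: (z < n - 1)%N; case: (z < n - q - 2)%N; rewrite ?mul0rn.
Qed.

Lemma N_deg (z : 'I_n) :
  \sum_(u < n) (N_edge q z u)%:R =
  (if (z < n - 1)%N then (n - q - 2)%:R else 0) + (q + 1)%:R +
  (if (z < n - q - 2)%N then 0 else 1) :> R.
Proof.
have := N_sum z 1 1 1; rewrite !mulr1 => <-.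
by apply: eq_bigr => u _; rewrite !if_same mul1r.
Qed.

End NSums.

Section LargestEigenvalues.
Variable R : realType.

Lemma M_adj_largest_eigenvalue n m s t (lam a1 a2 b1 b2 : R) :
  (0 < n)%N -> (s <= n)%N -> (t <= m)%N ->
  0 < a1 -> 0 < a2 -> 0 < b1 -> 0 < b2 ->
  lam * a1 = (m - t)%:R * b1 ->
  lam * a2 = (m - t)%:R * b1 + t%:R * b2 ->
  lam * b1 = s%:R * a1 + (n - s)%:R * a2 ->
  lam * b2 = (n - s)%:R * a2 ->
  largest_eigenvalue (M_graph R n m s t) lam.
Proof.
move=> n_gt0 s_le_n t_le_m a1_gt0 a2_gt0 b1_gt0 b2_gt0 eqX1 eqX2 eqY1 eqY2.
pose fx (x : 'I_n) := if (x < s)%N then a1 else a2.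
pose fy (y : 'I_m) := if (y < m - t)%N then b1 else b2.
apply: (largest_eigenvalue_pos_eigvec (w := bip_vec fx fy)).
- by rewrite addn_gt0 n_gt0.
- exact: tr_bip_adj.
- exact: bip_adj_ge0.
- by apply: bip_vec_gt0 => z; rewrite /fx /fy; case: ifP.
apply: bip_adj_eigvec => [x|y]; rewrite ?M_sumX ?M_sumY // /fx /fy.
  by case: ifP => _; rewrite ?addr0.
by case: ifP => _; rewrite ?add0r.
Qed.

Lemma M_lap_largest_eigenvalue n m s t (lam a1 a2 b1 b2 : R) :
  (0 < n)%N -> (s <= n)%N -> (t <= m)%N ->
  0 < a1 -> 0 < a2 -> 0 < b1 -> 0 < b2 ->
  lam * a1 = (m - t)%:R * a1 + (m - t)%:R * b1 ->
  lam * a2 = m%:R * a2 + ((m - t)%:R * b1 + t%:R * b2) ->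
  lam * b1 = n%:R * b1 + (s%:R * a1 + (n - s)%:R * a2) ->
  lam * b2 = (n - s)%:R * b2 + (n - s)%:R * a2 ->
  largest_eigenvalue (signless_lap (M_graph R n m s t)) lam.
Proof.
move=> n_gt0 s_le_n t_le_m a1_gt0 a2_gt0 b1_gt0 b2_gt0 eqX1 eqX2 eqY1 eqY2.
pose fx (x : 'I_n) := if (x < s)%N then a1 else a2.
pose fy (y : 'I_m) := if (y < m - t)%N then b1 else b2.
have m_eq : m%:R = (m - t)%:R + t%:R :> R by rewrite -natrD subnK.
have n_eq : n%:R = s%:R + (n - s)%:R :> R by rewrite -natrD subnKC.
rewrite m_eq in eqX2; rewrite n_eq in eqY1.
apply: (largest_eigenvalue_pos_eigvec (w := bip_vec fx fy)).
- by rewrite addn_gt0 n_gt0.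
- exact/tr_signless_lap/tr_bip_adj.
- exact/signless_lap_ge0/bip_adj_ge0.
- by apply: bip_vec_gt0 => z; rewrite /fx /fy; case: ifP.
apply: bip_lap_eigvec => [x|y]; rewrite ?M_degX ?M_degY ?M_sumX ?M_sumY // /fx /fy.
  by case: ifP => _; rewrite ?addr0; lra.
by case: ifP => _; rewrite ?add0r; lra.
Qed.

Lemma N_adj_largest_eigenvalue n q (lam g1 g2 g3 : R) :
  (q + 2 <= n)%N -> 0 < g1 -> 0 < g2 -> 0 < g3 ->
  lam * g1 = (n - q - 2)%:R * g1 + (q + 1)%:R * g2 ->
  lam * g2 = (n - q - 2)%:R * g1 + (q + 1)%:R * g2 + g3 ->
  lam * g3 = (q + 1)%:R * g2 + g3 ->
  largest_eigenvalue (N_graph R n q) lam.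
Proof.
move=> q2_le_n g1_gt0 g2_gt0 g3_gt0 eq1 eq2 eq3.
pose f (i : 'I_n) := if (i < n - q - 2)%N then g1 else if (i < n - 1)%N then g2 else g3.
have eqf z : \sum_u f u * (N_edge q z u)%:R = lam * f z.
  rewrite N_sum // /f.
  case: (ltnP z (n - q - 2)) => hz; case: (ltnP z (n - 1)) => hz' /=;
    rewrite ?addr0 ?add0r; first [lia | lra].
apply: (largest_eigenvalue_pos_eigvec (w := bip_vec f f)).
- by rewrite addn_gt0; lia.
- exact: tr_bip_adj.
- exact: bip_adj_ge0.
- by apply: bip_vec_gt0 => z; rewrite /f; case: ifP => _ //; case: ifP.
apply: bip_adj_eigvec => // y; rewrite -eqf.
by apply: eq_bigr => x _; rewrite N_edge_sym.
Qed.

Lemma N_lap_largest_eigenvalue n q (lam g1 g2 g3 : R) :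
  (q + 2 <= n)%N -> 0 < g1 -> 0 < g2 -> 0 < g3 ->
  lam * g1 = ((n - q - 2)%:R + (q + 1)%:R) * g1 +
             ((n - q - 2)%:R * g1 + (q + 1)%:R * g2) ->
  lam * g2 = ((n - q - 2)%:R + (q + 1)%:R + 1) * g2 +
             ((n - q - 2)%:R * g1 + (q + 1)%:R * g2 + g3) ->
  lam * g3 = ((q + 1)%:R + 1) * g3 + ((q + 1)%:R * g2 + g3) ->
  largest_eigenvalue (signless_lap (N_graph R n q)) lam.
Proof.
move=> q2_le_n g1_gt0 g2_gt0 g3_gt0 eq1 eq2 eq3.
pose f (i : 'I_n) := if (i < n - q - 2)%N then g1 else if (i < n - 1)%N then g2 else g3.
have eqf z : f z * \sum_u (N_edge q z u)%:R + \sum_u f u * (N_edge q z u)%:R = lam * f z.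
  rewrite N_deg // N_sum // /f.
  case: (ltnP z (n - q - 2)) => hz; case: (ltnP z (n - 1)) => hz' /=;
    rewrite ?addr0 ?add0r; first [lia | lra].
apply: (largest_eigenvalue_pos_eigvec (w := bip_vec f f)).
- by rewrite addn_gt0; lia.
- exact/tr_signless_lap/tr_bip_adj.
- exact/signless_lap_ge0/bip_adj_ge0.
- by apply: bip_vec_gt0 => z; rewrite /f; case: ifP => _ //; case: ifP.
apply: bip_lap_eigvec => // y; rewrite -eqf.
by congr (_ * _ + _); apply: eq_bigr => x _; rewrite N_edge_sym.
Qed.

End LargestEigenvalues.

(* Characteristic polynomials, in x with N = n and K = k, of the quotient
   matrices of the adjacency matrices of M (blocks X1, X2, Y1, Y2) and of N
   (blocks X_i, Y_i), and of the signless Laplacians; for M only the quadratic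
   factor carrying the spectral radius is kept. *)
Section QuotientCharacteristic.
Variable R : comNzRingType.
Variables N K : R.

Definition M_adj_char (x : R) :=
  (x ^+ 2 - (N - K) * (N - 2)) * (x ^+ 2 - 2 * K) - K * (N - 2) * x ^+ 2.
Definition N_adj_char (x : R) := x ^+ 3 - N * x ^+ 2 + (N - K) * x + (K - 1) * (N - K).
Definition M_lap_char (x : R) := x ^+ 2 - (2 * N + K - 2) * x + 2 * K * (N - 2).
Definition N_lap_char (x : R) :=
  (x - (N + K - 1)) * (x - (2 * N - K - 1)) * (x - (K + 1))
  - (N - K) * (K - 1) * (x - (K + 1)) - (K - 1) * (x - (2 * N - K - 1)).

End QuotientCharacteristic.

Lemma polyfun_root_between (R : rcfType) (f : R -> R) (p : {poly R}) a b :
  (forall x, p.[x] = f x) -> a <= b -> f a < 0 -> 0 < f b ->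
  exists2 c, a < c < b & f c = 0.
Proof.
move=> pf ab fa fb; have [|c] := poly_ivtoo (p := p) ab; first by rewrite !pf nmulr_rlt0.
by rewrite in_itv /= => c_ab /rootP pc; exists c; rewrite // -pf.
Qed.

Section QuotientRoots.
Variables (R : rcfType) (N K : R).

Lemma M_adj_char_root : 2 <= K -> K + 1 <= N ->
  exists2 c, N - 2 < c < N & M_adj_char N K c = 0.
Proof.
move=> K_ge2 K_lt_N.
apply: (polyfun_root_between (p := ('X^2 - ((N - K) * (N - 2))%:P) * ('X^2 - (2 * K)%:P)
                                    - (K * (N - 2))%:P * 'X^2)).
- by move=> x; rewrite /M_adj_char !hornerE; ring.
- lra.
- have -> : M_adj_char N K (N - 2) = - (2 * (N - 2) * ((N - 2) ^+ 2 + K * (K - 2))).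
    by rewrite /M_adj_char; ring.
  have N2_gt0 : 0 < N - 2 by lra.
  have : 0 < (N - 2) ^+ 2 + K * (K - 2) by nra.
  nra.
- have -> : M_adj_char N K N = 2 * N * (N ^+ 2 - K ^+ 2 - 2 * K) + 4 * K ^+ 2.
    by rewrite /M_adj_char; ring.
  have : 0 <= N * (N ^+ 2 - K ^+ 2 - 2 * K) by rewrite mulr_ge0 //; nra.
  nra.
Qed.

Lemma N_adj_char_lt0_at_M_root c : 2 <= K -> 3 * K < N -> N - 2 < c ->
  M_adj_char N K c = 0 -> N_adj_char N K c < 0.
Proof.
move=> K_ge2 N_gt3K c_gt Mc.
set t := c ^+ 2; set m := N - K; set j := K - 1.
have c_gt1 : 1 < c by lra.
have m_lt_t : m < t.
  have : 0 < (c - 1) * c by rewrite mulr_gt0 //; lra.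
  rewrite /t /m expr2; lra.
have Nt_gt : j * m < N * t.
  have : 0 < (N - j) * m by rewrite /j /m mulr_gt0 //; lra.
  have : 0 < N * (t - m) by rewrite mulr_gt0 //; lra.
  lra.
rewrite ltNge; apply/negP => Nc_ge0.
have le : N * t - j * m <= c * (t + m).
  by move: Nc_ge0; rewrite /N_adj_char /t /m /j; lra.
have : (N * t - j * m) ^+ 2 <= (c * (t + m)) ^+ 2 by rewrite ler_pXn2r ?nnegrE //; lra.
(* Squaring removes the odd powers of c; the quartic of M then turns the
   difference of the squares into a negative quantity. *)
have : (c * (t + m)) ^+ 2 - (N * t - j * m) ^+ 2 =
       t * M_adj_char N K c + m * (3 * K - N) * t - j ^+ 2 * m ^+ 2.
  by rewrite /M_adj_char /t /m /j; ring.
rewrite Mc mulr0 add0r.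
have m_gt0 : 0 < m by rewrite /m; lra.
have : m * (3 * K - N) * t < 0.
  by rewrite (pmulr_llt0 _ (lt_trans m_gt0 m_lt_t)) (pmulr_rlt0 _ m_gt0); lra.
have : 0 <= j ^+ 2 * m ^+ 2 by rewrite mulr_ge0 ?sqr_ge0.
lra.
Qed.

Lemma N_adj_char_root c : 2 <= K -> 3 * K < N -> N - 2 < c < N ->
  M_adj_char N K c = 0 -> exists2 r, c < r < N & N_adj_char N K r = 0.
Proof.
move=> K_ge2 N_gt3K /andP[c_gt c_lt] Mc.
apply: (polyfun_root_between
  (p := 'X^3 - N%:P * 'X^2 + (N - K)%:P * 'X + ((K - 1) * (N - K))%:P)).
- by move=> x; rewrite /N_adj_char !hornerE; ring.
- exact: ltW.
- exact: N_adj_char_lt0_at_M_root.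
- have -> : N_adj_char N K N = (N - K) * (N + K - 1) by rewrite /N_adj_char; ring.
  by rewrite mulr_gt0 //; lra.
Qed.

Lemma M_lap_char_root : 2 <= K -> K + 1 <= N ->
  exists c, [/\ N + K < c, 2 * N - 2 < c & M_lap_char N K c = 0].
Proof.
move=> K_ge2 K_lt_N.
have [c /andP[c_gt _] Mc] : exists2 c, N + K < c < 2 * N + K - 2 & M_lap_char N K c = 0.
  apply: (polyfun_root_between (p := 'X^2 - (2 * N + K - 2)%:P * 'X + (2 * K * (N - 2))%:P)).
  - by move=> x; rewrite /M_lap_char !hornerE; ring.
  - lra.
  - have -> : M_lap_char N K (N + K) = - ((N - K) * (N - 2)) by rewrite /M_lap_char; ring.
    by rewrite oppr_lt0 mulr_gt0 //; lra.
  - have -> : M_lap_char N K (2 * N + K - 2) = 2 * K * (N - 2) by rewrite /M_lap_char; ring.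
    by rewrite !mulr_gt0 //; lra.
exists c; split => //.
have : (c - K) * (c - (2 * N - 2)) = 2 * K by move: Mc; rewrite /M_lap_char; lra.
nra.
Qed.

Lemma N_lap_char_root c : 2 <= K -> K + 1 <= N -> N + K < c -> 2 * N - 2 < c ->
  M_lap_char N K c = 0 ->
  exists r, [/\ 2 * N - K - 1 < r, K + 1 < r, r < c & N_lap_char N K r = 0].
Proof.
move=> K_ge2 K_lt_N c_gt_NK c_gt_2N Mc.
(* x0 is the larger of the first two diagonal entries of the quotient matrix,
   where the product term of the cubic vanishes. *)
have [x0 [x0_ge1 x0_ge2 x0_lt_c x0_root]] : exists x0,
    [/\ N + K - 1 <= x0, 2 * N - K - 1 <= x0, x0 < c &
         (x0 - (N + K - 1)) * (x0 - (2 * N - K - 1)) = 0].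
  case: (lerP (N + K - 1) (2 * N - K - 1)) => h.
    by exists (2 * N - K - 1); rewrite subrr mulr0; split; lra.
  by exists (N + K - 1); rewrite subrr mul0r; split; lra.
have Nx0_lt0 : N_lap_char N K x0 < 0.
  rewrite /N_lap_char x0_root mul0r sub0r.
  have : 0 < (N - K) * (K - 1) * (x0 - (K + 1)) by rewrite !mulr_gt0 //; lra.
  have : 0 <= (K - 1) * (x0 - (2 * N - K - 1)) by rewrite mulr_ge0 //; lra.
  lra.
have Nc_gt0 : 0 < N_lap_char N K c.
  have -> : N_lap_char N K c = (c - N - 1) * M_lap_char N K c
                               + (N - K + 2) * c - 2 * (N ^+ 2 - N * K + 2 * K).
    by rewrite /N_lap_char /M_lap_char; ring.
  rewrite Mc mulr0 add0r.
  case: (lerP (N - K) 2) => h; nra.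
suff [r /andP[r_gt r_lt] Nr] : exists2 r, x0 < r < c & N_lap_char N K r = 0.
  by exists r; split=> //; lra.
apply: (polyfun_root_between
  (p := ('X - (N + K - 1)%:P) * ('X - (2 * N - K - 1)%:P) * ('X - (K + 1)%:P)
        - ((N - K) * (K - 1))%:P * ('X - (K + 1)%:P)
        - (K - 1)%:P * ('X - (2 * N - K - 1)%:P))) => //.
- by move=> x; rewrite /N_lap_char !hornerE.
- exact: ltW.
Qed.

End QuotientRoots.

Section SpectralRadii.
Variable R : realType.

Lemma M_adj_largest_of_root n k (c : R) : (2 <= k)%N -> (k < n)%N ->
  n%:R - 2 < c -> M_adj_char n%:R k%:R c = 0 ->
  largest_eigenvalue (M_graph R n n (n - k) 2) c.
Proof.
move=> k_ge2 k_lt_n c_gt Mc.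
have K_ge2 : 2 <= k%:R :> R by rewrite ler_nat.
have K_lt_N : k%:R + 1 <= n%:R :> R by rewrite natr1 ler_nat.
set N : R := n%:R in c_gt Mc K_lt_N *; set K : R := k%:R in Mc K_ge2 K_lt_N *.
have A_lt : (N - K) * (N - 2) < c ^+ 2 by nra.
apply: (M_adj_largest_eigenvalue (a1 := K * (N - 2) * c)
  (a2 := (c ^+ 2 - (N - K) * (N - 2)) * c) (b1 := K * c ^+ 2)
  (b2 := K * (c ^+ 2 - (N - K) * (N - 2))));
  rewrite ?subKn ?natrB -/N -/K; try lia.
1-4: by rewrite !mulr_gt0 //; lra.
2: by move: Mc; rewrite /M_adj_char; lra.
all: ring.
Qed.

Lemma N_adj_largest_of_root n k (r : R) : (2 <= k)%N -> (k <= n)%N ->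
  n%:R - k%:R < r -> 1 < r -> N_adj_char n%:R k%:R r = 0 ->
  largest_eigenvalue (N_graph R n (k - 2)) r.
Proof.
move=> k_ge2 k_le_n r_gt_NK r_gt1 Nr.
have K_ge2 : 2 <= k%:R :> R by rewrite ler_nat.
set N : R := n%:R in r_gt_NK Nr *; set K : R := k%:R in r_gt_NK Nr K_ge2 *.
have p1E : (n - (k - 2) - 2)%:R = N - K.
  by rewrite (_ : n - (k - 2) - 2 = n - k)%N ?natrB //; lia.
have p2E : (k - 2 + 1)%:R = K - 1 by rewrite (_ : k - 2 + 1 = k - 1)%N ?natrB //; lia.
apply: (N_adj_largest_eigenvalue (g1 := (K - 1) * (r - 1)) (g2 := (r - (N - K)) * (r - 1))
  (g3 := (K - 1) * (r - (N - K)))); rewrite ?p1E ?p2E; first lia.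
1-3: by rewrite !mulr_gt0 //; lra.
2: by move: Nr; rewrite /N_adj_char; lra.
all: ring.
Qed.

Lemma M_lap_largest_of_root n k (c : R) : (2 <= k)%N -> (k < n)%N ->
  n%:R + k%:R < c -> 2 * n%:R - 2 < c -> M_lap_char n%:R k%:R c = 0 ->
  largest_eigenvalue (signless_lap (M_graph R n n (n - k) 2)) c.
Proof.
move=> k_ge2 k_lt_n c_gt_NK c_gt_2N Mc.
have K_lt_N : k%:R < n%:R :> R by rewrite ltr_nat.
set N : R := n%:R in c_gt_NK c_gt_2N Mc K_lt_N *; set K : R := k%:R in c_gt_NK Mc K_lt_N *.
apply: (M_lap_largest_eigenvalue (a1 := 2 * (c - N - K)) (a2 := 2 * (N - K))
  (b1 := 2 * (N - K)) (b2 := (N - K) * (c - 2 * N + 2)));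
  rewrite ?subKn ?natrB -/N -/K; try lia.
1-4: by rewrite !mulr_gt0 //; lra.
- by move: Mc; rewrite /M_lap_char; lra.
- ring.
- ring.
- have : (N - K) * M_lap_char N K c = 0 by rewrite Mc mulr0.
  by rewrite /M_lap_char; lra.
Qed.

Lemma N_lap_largest_of_root n k (r : R) : (2 <= k)%N -> (k <= n)%N ->
  2 * n%:R - k%:R - 1 < r -> k%:R + 1 < r -> N_lap_char n%:R k%:R r = 0 ->
  largest_eigenvalue (signless_lap (N_graph R n (k - 2))) r.
Proof.
move=> k_ge2 k_le_n r_gt_2NK r_gt_K1 Nr.
have K_ge2 : 2 <= k%:R :> R by rewrite ler_nat.
set N : R := n%:R in r_gt_2NK Nr *; set K : R := k%:R in r_gt_2NK r_gt_K1 Nr K_ge2 *.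
have p1E : (n - (k - 2) - 2)%:R = N - K.
  by rewrite (_ : n - (k - 2) - 2 = n - k)%N ?natrB //; lia.
have p2E : (k - 2 + 1)%:R = K - 1 by rewrite (_ : k - 2 + 1 = k - 1)%N ?natrB //; lia.
apply: (N_lap_largest_eigenvalue (g1 := (K - 1) * (r - K - 1))
  (g2 := (r - (2 * N - K - 1)) * (r - K - 1)) (g3 := (K - 1) * (r - (2 * N - K - 1))));
  rewrite ?p1E ?p2E; first lia.
1-3: by rewrite !mulr_gt0 //; lra.
all: move: Nr; rewrite /N_lap_char; lra.
Qed.

End SpectralRadii.

Theorem lemma4p1 (R : realType) :
  (forall k n : nat, (2 <= k)%N -> (2 * k ^ 2 + 3 <= n)%N ->
     exists rhoN rhoM : R,
       [/\ largest_eigenvalue (N_graph R n (k - 2)) rhoN,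
           largest_eigenvalue (M_graph R n n (n - k) 2) rhoM &
           rhoM < rhoN])
  /\
  (forall k n : nat, (2 <= k)%N -> (k + 1 <= n)%N ->
     exists qM qN : R,
       [/\ largest_eigenvalue (signless_lap (M_graph R n n (n - k) 2)) qM,
           largest_eigenvalue (signless_lap (N_graph R n (k - 2))) qN &
           qN < qM]).
Proof.
split=> k n k_ge2 n_large; have K_ge2 : 2 <= k%:R :> R by rewrite ler_nat.
- have K_lt_N : k%:R + 1 <= n%:R :> R by rewrite natr1 ler_nat; nia.
  have N_gt3K : 3 * k%:R < n%:R :> R by rewrite -natrM ltr_nat; nia.
  have [c c_range Mc] := M_adj_char_root K_ge2 K_lt_N.
  have [r /andP[c_lt_r _] Nr] := N_adj_char_root K_ge2 N_gt3K c_range Mc.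
  case/andP: c_range => c_gt _.
  exists r, c; split => //.
  + by apply: N_adj_largest_of_root => //; [nia | lra | lra].
  + by apply: M_adj_largest_of_root => //; nia.
- have K_lt_N : k%:R + 1 <= n%:R :> R by rewrite natr1 ler_nat; lia.
  have [c [c_gt_NK c_gt_2N Mc]] := M_lap_char_root K_ge2 K_lt_N.
  have [r [r_gt_2NK r_gt_K1 r_lt_c Nr]] := N_lap_char_root K_ge2 K_lt_N c_gt_NK c_gt_2N Mc.
  exists c, r; split => //.
  + by apply: M_lap_largest_of_root => //; lia.
  + by apply: N_lap_largest_of_root => //; lia.
Qed.
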